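(* Let $G$ be the final graph of the uncoordinated construction (described in the context) on a set $P\subset\mathbb{R}^d$ of $n$ points with parameter $s>1$. Then $G$ is a spanner with stretch factor $(s+1)/(s-1)$ (for all $p,q\in P$ the shortest path length in $G$, with edges weighted by Euclidean length, is at most $\frac{s+1}{s-1}|pq|$) and $G$ has $O(n s^d)$ edges, where the implied constant depends only on $d$.
   Context: Fix $d\ge 1$; $|xy|$ is Euclidean distance. Uncoordinated construction: start with the graph $G$ on vertex set $P$ with no edges. Every ordered pair $(p,q)$ of distinct points of $P$ is processed exactly once, in an arbitrary order, one at a time. When $(p,q)$ is processed, the edge $pq$ is added to $G$ unless $G$ currently contains an edge whose endpoints can be labeled $p',q'$ with $|pp'|\le |p'q'|/(2s+2)$ and $|qq'|\le |p'q'|/(2s+2)$. $G$ is the graph after all pairs are processed. *)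

From mathcomp Require Import all_boot all_order all_algebra.
Set Implicit Arguments. Unset Strict Implicit. Unset Printing Implicit Defensive.
Import Order.TTheory GRing.Theory Num.Theory.
Local Open Scope ring_scope.

Section Defs.
Variables (R : rcfType) (d : nat).
Notation pt := 'rV[R]_d.

Definition dist (x y : pt) : R := Num.sqrt (\sum_(i < d) (x 0 i - y 0 i) ^+ 2).

Definition blocks_oriented (s : R) (p q p' q' : pt) : bool :=
  (dist p p' <= dist p' q' / (2 * s + 2)) && (dist q q' <= dist p' q' / (2 * s + 2)).

Definition blocks (s : R) (pq : pt * pt) (e : pt * pt) : bool :=
  blocks_oriented s pq.1 pq.2 e.1 e.2 || blocks_oriented s pq.1 pq.2 e.2 e.1.

Definition process (s : R) (E : seq (pt * pt)) (pq : pt * pt) : seq (pt * pt) :=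
  if has (blocks s pq) E then E else rcons E pq.

Definition uncoordinated (s : R) (ord : seq (pt * pt)) : seq (pt * pt) :=
  foldl (process s) [::] ord.

Definition valid_order (P : seq pt) (ord : seq (pt * pt)) : Prop :=
  uniq ord /\ forall p q : pt, ((p, q) \in ord) = [&& p \in P, q \in P & p != q].

Definition adj (E : seq (pt * pt)) (x y : pt) : bool := ((x, y) \in E) || ((y, x) \in E).

Fixpoint path_len (x : pt) (w : seq pt) : R :=
  if w is y :: w' then dist x y + path_len y w' else 0.

End Defs.

(** The spanner property is proved by induction on the number of pairs of points
    closer than [|pq|].  If [(p, q)] was rejected, some edge [p'q'] of [G] has
    [p, q] within [|p'q'| / (2s + 2)] of its endpoints; then [|pp'|] and [|qq'|]
    are below [|pq| / s], induction gives paths [p ~> p'] and [q' ~> q], and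
    [t = (s + 1) / (s - 1)] is exactly the stretch for which
    [t |pp'| + |p'q'| + t |q'q| <= t |pq|].

    For the size bound, note that no edge of [G] is blocked by an earlier edge.
    A farthest-first ordering of [P] attaches a radius to each point, giving nets
    at every scale.  An edge [ab] is charged to the pair of net points covering
    [a] and [b] at scale [|ab| / (8s + 8)], listed by increasing radius; two edges
    charged to the same pair block each other and hence coincide.  The partners
    [B] of a net point [A] are [rad A]-separated and lie within [(8s + 10) rad A]
    of [A], so a grid packing bounds their number by [(2N + 2)^d] with
    [N ~ d (8s + 10)], which gives [O((40 d s)^d)] edges per point. *)

From mathcomp Require Import all_boot all_order all_algebra.
From mathcomp Require Import ring lra.
Set Implicit Arguments. Unset Strict Implicit. Unset Printing Implicit Defensive.
Import Order.TTheory GRing.Theory Num.Theory.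
Local Open Scope ring_scope.

Section EuclideanDistance.
Variables (R : rcfType) (d : nat).
Implicit Types (x y z w : 'rV[R]_d).

Lemma sumsq_ge0 (a : 'I_d -> R) : 0 <= \sum_i a i ^+ 2.
Proof. by apply: sumr_ge0 => i _; exact: sqr_ge0. Qed.

Lemma sumsq_eq0 (a : 'I_d -> R) : \sum_i a i ^+ 2 = 0 -> forall i, a i = 0.
Proof.
move=> a0 i; apply/eqP; rewrite -sqrf_eq0; apply/eqP.
exact: (psumr_eq0P (fun i _ => sqr_ge0 (a i)) a0).
Qed.

Lemma cauchy_schwarz (a b : 'I_d -> R) :
  (\sum_i a i * b i) ^+ 2 <= (\sum_i a i ^+ 2) * (\sum_i b i ^+ 2).
Proof.
set A := \sum_i a i ^+ 2; set B := \sum_i b i ^+ 2; set C := \sum_i a i * b i.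
have [B0|B_neq0] := eqVneq B 0.
  have -> : C = 0 by rewrite /C big1 // => i _; rewrite (sumsq_eq0 B0) mulr0.
  by rewrite B0 expr0n mulr0.
have B_gt0 : 0 < B by rewrite lt_def B_neq0 sumsq_ge0.
have expand : \sum_i (a i * B - b i * C) ^+ 2 = B * (A * B - C ^+ 2).
  rewrite (eq_bigr (fun i =>
    a i ^+ 2 * (B * B) - (a i * b i) * (2 * B * C) + b i ^+ 2 * (C * C))); last first.
    by move=> i _; ring.
  by rewrite big_split /= sumrB -!mulr_suml -/A -/B -/C; ring.
have := sumsq_ge0 (fun i => a i * B - b i * C).
by rewrite expand pmulr_rge0 // subr_ge0.
Qed.

Lemma dist_ge0 x y : 0 <= dist x y.
Proof. exact: sqrtr_ge0. Qed.

Lemma distC x y : dist x y = dist y x.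
Proof.
by rewrite /dist; congr Num.sqrt; apply: eq_bigr => i _; rewrite -sqrrN opprB.
Qed.

Lemma distxx x : dist x x = 0.
Proof. by rewrite /dist big1 ?sqrtr0 // => i _; rewrite subrr expr0n. Qed.

Lemma dist_eq0 x y : (dist x y == 0) = (x == y).
Proof.
apply/idP/eqP => [|->]; last by rewrite distxx.
rewrite sqrtr_eq0 => sum_le0; apply/rowP => i; apply/subr0_eq.
by apply: (sumsq_eq0 (a := fun i => x 0 i - y 0 i)); apply/eqP;
  rewrite eq_le sum_le0 sumsq_ge0.
Qed.

Lemma dist_gt0 x y : (0 < dist x y) = (x != y).
Proof. by rewrite lt_def dist_ge0 dist_eq0 andbT. Qed.

Lemma normr_coord_le_dist x y i : `|x 0 i - y 0 i| <= dist x y.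
Proof.
rewrite /dist -sqrtr_sqr ler_wsqrtr // (bigD1 i) //= lerDl.
by apply: sumr_ge0 => j _; exact: sqr_ge0.
Qed.

Lemma dist_triangle x y z : dist x z <= dist x y + dist y z.
Proof.
rewrite /dist; set a := fun i => x 0 i - y 0 i; set b := fun i => y 0 i - z 0 i.
have -> : \sum_i (x 0 i - z 0 i) ^+ 2 = \sum_i (a i + b i) ^+ 2.
  by apply: eq_bigr => i _; rewrite /a /b subrKA.
rewrite -/(\sum_i a i ^+ 2) -/(\sum_i b i ^+ 2).
set A := \sum_i a i ^+ 2; set B := \sum_i b i ^+ 2; set C := \sum_i a i * b i.
have [A0 B0] := (sumsq_ge0 a, sumsq_ge0 b).
have sqrt_sum_ge0 : 0 <= Num.sqrt A + Num.sqrt B by rewrite addr_ge0 ?sqrtr_ge0.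
rewrite -(ger0_norm sqrt_sum_ge0) -sqrtr_sqr ler_wsqrtr //.
have -> : \sum_i (a i + b i) ^+ 2 = A + B + 2 * C.
  rewrite /A /B /C -big_split /= mulr_sumr -big_split /=.
  by apply: eq_bigr => i _; ring.
have : C <= Num.sqrt A * Num.sqrt B.
  rewrite (le_trans (ler_norm C)) // -sqrtrM // -sqrtr_sqr ler_wsqrtr //.
  exact: cauchy_schwarz.
by rewrite sqrrD !sqr_sqrtr // mulr2n; lra.
Qed.

Lemma dist_triangle3 x y z w : dist x w <= dist x y + dist y z + dist z w.
Proof.
by rewrite (le_trans (dist_triangle x y w)) // -addrA lerD2l dist_triangle.
Qed.

End EuclideanDistance.

Lemma pairwise_total (T : eqType) (r : rel T) (xs : seq T) x y :
  pairwise r xs -> x \in xs -> y \in xs -> x != y -> r x y || r y x.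
Proof.
elim: xs => [//|z xs IH] /= /andP [/allP rz pxs].
rewrite !inE => /orP [/eqP->|xxs] /orP [/eqP->|yxs]; rewrite ?eqxx //.
- by rewrite rz.
- by rewrite rz ?orbT.
- exact: IH.
Qed.

Section Construction.
Variables (R : rcfType) (d : nat) (s : R).
Implicit Types (E ord : seq ('rV[R]_d * 'rV[R]_d)) (e pq : 'rV[R]_d * 'rV[R]_d).

Definition not_blocking : rel ('rV[R]_d * 'rV[R]_d) := fun e f => ~~ blocks s f e.

Lemma blocks_refl e : -1 < s -> blocks s e e.
Proof.
move=> s_gt; case: e => p q.
by rewrite /blocks /blocks_oriented /= !distxx divr_ge0 ?dist_ge0 //; lra.
Qed.

Lemma blocks_sym_edge p q e : blocks s (q, p) e = blocks s (p, q) e.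
Proof.
case: e => p' q'; rewrite /blocks /blocks_oriented /= (distC q' p').
by rewrite orbC [X in X || _]andbC [X in _ || X]andbC.
Qed.

Lemma process_sub E pq : {subset E <= process s E pq}.
Proof. by rewrite /process; case: ifP => _ e eE //; rewrite mem_rcons inE eE orbT. Qed.

Lemma mem_process E pq e : e \in process s E pq -> (e \in E) || (e == pq).
Proof.
by rewrite /process; case: ifP => _; [move->|rewrite mem_rcons inE orbC].
Qed.

Lemma process_cover E pq : (pq \in process s E pq) || has (blocks s pq) E.
Proof. by rewrite /process; case: ifP; rewrite ?orbT // mem_rcons mem_head. Qed.

Lemma process_pairwise E pq :
  pairwise not_blocking E -> pairwise not_blocking (process s E pq).
Proof.
rewrite /process; case: ifP => // blocked pE.
by rewrite pairwise_rcons pE andbT; apply/allP => e eE; apply: contraFN blocked => ?;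
  apply/hasP; exists e.
Qed.

Lemma mem_foldl_process E0 ord e :
  e \in foldl (process s) E0 ord -> (e \in E0) || (e \in ord).
Proof.
elim: ord E0 => [|pq ord IH] E0 /=; first by move->.
move=> /IH /orP [/mem_process /orP [->|/eqP->]|e_ord] //.
  by rewrite mem_head orbT.
by rewrite inE e_ord !orbT.
Qed.

Lemma foldl_process_sub E0 ord : {subset E0 <= foldl (process s) E0 ord}.
Proof.
by elim: ord E0 => [|pq ord IH] E0 //= e /(process_sub pq) /IH.
Qed.

Lemma foldl_process_cover E0 ord pq : pq \in ord ->
  let E := foldl (process s) E0 ord in (pq \in E) || has (blocks s pq) E.
Proof.
elim: ord E0 => [//|pq' ord IH] E0; rewrite inE => /orP [/eqP-> /=|pq_ord]; last exact: IH.
have /orP [pqE|/hasP [e eE be]] := process_cover E0 pq'.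
  by rewrite foldl_process_sub.
apply/orP; right; apply/hasP; exists e => //.
exact/foldl_process_sub/process_sub.
Qed.

Lemma foldl_process_pairwise E0 ord : pairwise not_blocking E0 ->
  pairwise not_blocking (foldl (process s) E0 ord).
Proof.
by elim: ord E0 => [|pq ord IH] E0 //= pE; apply/IH/process_pairwise.
Qed.

Lemma uncoordinated_pairwise ord : pairwise not_blocking (uncoordinated s ord).
Proof. exact: foldl_process_pairwise. Qed.

Lemma uncoordinated_uniq ord : -1 < s -> uniq (uncoordinated s ord).
Proof.
move=> s_gt; apply: pairwise_uniq (uncoordinated_pairwise ord) => e.
by rewrite /not_blocking blocks_refl.
Qed.

Lemma uncoordinated_mutual_blocks ord e f :
  e \in uncoordinated s ord -> f \in uncoordinated s ord ->
  blocks s e f -> blocks s f e -> e = f.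
Proof.
move=> eE fE bef bfe; apply/eqP; apply: contraT.
move=> /(pairwise_total (uncoordinated_pairwise ord) eE fE).
by rewrite /not_blocking bef bfe.
Qed.

Variables (P : seq 'rV[R]_d) (ord : seq ('rV[R]_d * 'rV[R]_d)).
Hypothesis ordP : valid_order P ord.
Local Notation E := (uncoordinated s ord).

Lemma uncoordinated_edgeP e : e \in E -> [/\ e.1 \in P, e.2 \in P & e.1 != e.2].
Proof. by case: e => p q /mem_foldl_process /=; rewrite ordP.2 => /and3P. Qed.

Lemma uncoordinated_cover p q : p \in P -> q \in P -> p != q ->
  ((p, q) \in E) || has (blocks s (p, q)) E.
Proof. by move=> pP qP pq; apply: foldl_process_cover; rewrite ordP.2 pP qP. Qed.

Lemma size_uncoordinated_le : -1 < s -> (size E <= size P * size P)%N.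
Proof.
move=> s_gt; rewrite -(size_allpairs pair).
apply: uniq_leq_size (uncoordinated_uniq ord s_gt) _ => -[p q] /uncoordinated_edgeP.
by case=> /= pP qP _; apply/allpairsP; exists (p, q).
Qed.

End Construction.

Lemma count_lt_sub (T : eqType) (a b : pred T) (r : seq T) z :
  subpred a b -> z \in r -> b z -> ~~ a z -> (count a r < count b r)%N.
Proof.
move=> ab; elim: r => [//|x r IH]; rewrite inE => /orP [/eqP <-|zr] bz naz /=.
  by rewrite bz (negbTE naz) add0n add1n ltnS sub_count.
have := IH zr bz naz; case ax: (a x); first by rewrite (ab _ ax) ltn_add2l.
by move=> lt_ab; rewrite (leq_trans lt_ab) ?leq_addl.
Qed.

Lemma detour_bound (R : realFieldType) (s a b L D : R) :
  1 < s -> 0 <= a -> 0 <= b -> 0 < D ->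
  a * (2 * s + 2) <= L -> b * (2 * s + 2) <= L -> L <= a + D + b ->
  [/\ a < D, b < D & (s + 1) / (s - 1) * a + L + (s + 1) / (s - 1) * b
                     <= (s + 1) / (s - 1) * D].
Proof.
move=> s_gt1 a_ge0 b_ge0 D_gt0 aL bL LD.
have sab : s * (a + b) <= D by nra.
split; [nra|nra|].
have s1_gt0 : 0 < s - 1 by rewrite subr_gt0.
rewrite -subr_ge0 (_ : _ - _ =
  ((s + 1) * D - ((s + 1) * a + L * (s - 1) + (s + 1) * b)) / (s - 1)).
  by rewrite divr_ge0 ?subr_ge0 ?(ltW s1_gt0) //; nra.
by field; rewrite lt0r_neq0.
Qed.

Lemma path_len_cat (R : rcfType) (d : nat) (x : 'rV[R]_d) w1 w2 :
  path_len x (w1 ++ w2) = path_len x w1 + path_len (last x w1) w2.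
Proof. by elim: w1 x => [|y w1 IH] x /=; rewrite ?add0r // IH addrA. Qed.

Section Spanner.
Variables (R : rcfType) (d : nat) (s : R) (P : seq 'rV[R]_d).
Variable ord : seq ('rV[R]_d * 'rV[R]_d).
Hypotheses (s_gt1 : 1 < s) (ordP : valid_order P ord).
Local Notation E := (uncoordinated s ord).
Local Notation t := ((s + 1) / (s - 1)).

Lemma uncoordinated_blocker p q : has (blocks s (p, q)) E ->
  exists x y, [/\ adj E x y, x \in P, y \in P,
    dist p x * (2 * s + 2) <= dist x y & dist q y * (2 * s + 2) <= dist x y].
Proof.
have c_gt0 : 0 < 2 * s + 2 by have := s_gt1; lra.
case/hasP => [[x y] xyE]; have [/= xP yP _] := uncoordinated_edgeP ordP xyE.
rewrite /blocks /blocks_oriented /= !ler_pdivlMr // => /orP [] /andP [px qy].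
  by exists x, y; rewrite /adj xyE.
by exists y, x; rewrite /adj xyE orbT.
Qed.

Definition shorter_pairs (D : R) : nat :=
  count (fun xy => dist xy.1 xy.2 < D) [seq (x, y) | x <- P, y <- P].

Lemma shorter_pairs_lt u v D : u \in P -> v \in P -> dist u v < D ->
  (shorter_pairs (dist u v) < shorter_pairs D)%N.
Proof.
move=> uP vP uvD; apply: (count_lt_sub (z := (u, v))) => /=.
- by move=> xy /lt_trans; apply.
- by apply/allpairsP; exists (u, v).
- by [].
- by rewrite ltxx.
Qed.

Lemma uncoordinated_spanner p q : p \in P -> q \in P ->
  exists w, [/\ path (adj E) p w, last p w = q & path_len p w <= t * dist p q].
Proof.
have [n small] := ubnP (shorter_pairs (dist p q)).
elim: n p q small => [//|n IH] p q small pP qP.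
have [<-|pq] := eqVneq p q; first by exists [::]; rewrite /= distxx mulr0.
have t_ge1 : 1 <= t by rewrite ler_pdivlMr ?subr_gt0 // mul1r; have := s_gt1; lra.
have /orP [pqE|blocked] := uncoordinated_cover s ordP pP qP pq.
  exists [:: q]; rewrite /= /adj pqE addr0; split => //.
  by rewrite ler_peMl ?dist_ge0.
have [x [y [xy xP yP px qy]]] := uncoordinated_blocker blocked.
have pq_gt0 : 0 < dist p q by rewrite dist_gt0.
have xy_le : dist x y <= dist p x + dist p q + dist q y.
  by rewrite (distC p x) dist_triangle3.
have [pxD qyD len] :=
  detour_bound s_gt1 (dist_ge0 p x) (dist_ge0 q y) pq_gt0 px qy xy_le.
have [w1 [pw1 lw1 len1]] :=
  IH p x (leq_trans (shorter_pairs_lt pP xP pxD) small) pP xP.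
have [w2 [pw2 lw2 len2]] : exists w,
  [/\ path (adj E) y w, last y w = q & path_len y w <= t * dist y q].
  by apply: IH (leq_trans (shorter_pairs_lt yP qP _) small) yP qP; rewrite distC.
exists (w1 ++ y :: w2); rewrite cat_path last_cat lw1 /= xy pw1 pw2.
split => //; rewrite path_len_cat lw1 /= (distC y q) in len2 *; lra.
Qed.

End Spanner.

Lemma exists_argmax_seq (R : realDomainType) (T : eqType) (f : T -> R) (r : seq T) :
  r != [::] -> exists2 x, x \in r & forall y, y \in r -> f y <= f x.
Proof.
elim: r => [//|a r IH] _; have [->|r_neq0] := eqVneq r [::].
  by exists a; rewrite ?mem_head // => y; rewrite inE => /eqP ->.
have [b br hb] := IH r_neq0; have [fab|fba] := lerP (f a) (f b).
  by exists b; rewrite ?inE ?br ?orbT // => y; rewrite inE => /orP [/eqP ->|/hb].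
exists a; rewrite ?mem_head // => y; rewrite inE => /orP [/eqP ->//|/hb fy].
exact: le_trans fy (ltW fba).
Qed.

Section FarthestFirst.
Variables (R : rcfType) (d : nat) (M : R) (P : seq 'rV[R]_d).
Implicit Types (x y z : 'rV[R]_d) (Q G : seq 'rV[R]_d).

(* Capped at [M], which is also its value on an empty [Q]. *)
Definition capped_dist x Q : R := foldr (fun q m => Num.min (dist x q) m) M Q.

Lemma capped_dist_le x Q q : q \in Q -> capped_dist x Q <= dist x q.
Proof.
elim: Q => [//|a Q IH]; rewrite inE ge_min => /orP [/eqP ->|/IH ->];
  by rewrite ?lexx ?orbT.
Qed.

Lemma capped_dist_attained x Q : capped_dist x Q < M ->
  exists2 q, q \in Q & capped_dist x Q = dist x q.
Proof.
elim: Q => [|a Q IH] /=; first by rewrite ltxx.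
have [le_a|lt_a] := leP (dist x a) (capped_dist x Q); first by exists a; rewrite ?mem_head.
by case/IH => q qQ ->; exists q; rewrite // inE qQ orbT.
Qed.

Definition farthest_first G := forall j, (j < size G)%N -> forall z, z \in P ->
  z \notin take j G -> capped_dist z (take j G) <= capped_dist (nth 0 G j) (take j G).

Lemma farthest_first_prefix : uniq P -> forall m, (m <= size P)%N ->
  exists G, [/\ uniq G, {subset G <= P}, size G = m & farthest_first G].
Proof.
move=> uP; elim=> [|m IH] m_le; first by exists [::]; split => // j.
have [G [uG GP szG ffG]] := IH (ltnW m_le).
have [|z] := exists_argmax_seq (fun z => capped_dist z G) (r := [seq z <- P | z \notin G]).
  apply: contraTneq m_le => rest0; rewrite -leqNgt -szG uniq_leq_size // => z zP.
  apply: contraT => zG; suff : z \in [seq z <- P | z \notin G] by rewrite rest0.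
  by rewrite mem_filter zG zP.
rewrite mem_filter => /andP [zG zP] z_max.
exists (rcons G z); split.
- by rewrite rcons_uniq zG uG.
- by move=> y; rewrite mem_rcons inE => /orP [/eqP ->|/GP].
- by rewrite size_rcons szG.
move=> j; rewrite size_rcons ltnS leq_eqVlt => /orP [/eqP ->|lj] y yP.
  rewrite nth_rcons ltnn eqxx -cats1 takel_cat // take_size => yG.
  by apply: z_max; rewrite mem_filter yG yP.
by rewrite nth_rcons lj -cats1 takel_cat ?(ltnW lj) //; apply: ffG.
Qed.

Variable G : seq 'rV[R]_d.
Hypotheses (uG : uniq G) (GP : G =i P) (ffG : farthest_first G).

Definition radius x := capped_dist x (take (index x G) G).

Lemma radius_nth j : (j < size G)%N ->
  radius (nth 0 G j) = capped_dist (nth 0 G j) (take j G).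
Proof. by move=> lt_j; rewrite /radius index_uniq. Qed.

Lemma radius_sep v w : v \in P -> w \in P -> v != w ->
  Num.min (radius v) (radius w) <= dist v w.
Proof.
rewrite -!GP => vG wG vw; rewrite ge_min.
have [lt_vw|lt_wv|eq_vw] := ltngtP (index v G) (index w G).
- by rewrite distC capped_dist_le ?orbT // in_take.
- by rewrite capped_dist_le // in_take.
- by move: vw; rewrite -(nth_index 0 vG) -(nth_index 0 wG) eq_vw eqxx.
Qed.

Lemma radius_gt0 v : 0 < M -> v \in P -> 0 < radius v.
Proof.
move=> M_gt0; rewrite -GP /radius => vG.
have [/capped_dist_attained [q qt ->]|] := ltP (capped_dist v (take (index v G) G)) M;
  last exact: lt_le_trans.
by rewrite dist_gt0; apply: contraTneq qt => <-; rewrite in_take ?ltnn.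
Qed.

(* Take the first center [G_k] of radius below [t]; if [x] comes after it, the
   farthest-first choice of [G_k] puts [x] within [t] of an earlier center. *)
Lemma radius_cover x t : x \in P -> 0 <= t -> t <= M ->
  exists2 A, A \in P & (t <= radius A) && (dist x A <= t).
Proof.
rewrite -GP => xG t_ge0 tM; set k := find (fun g => radius g < t) G.
have early j : (j < k)%N -> t <= radius (nth 0 G j).
  by move=> /(before_find 0) /negbT; rewrite -leNgt.
have [ltxk|] := ltnP (index x G) k.
  exists x; first by rewrite -GP.
  by rewrite distxx t_ge0 andbT -(nth_index 0 xG) early.
move=> le_kx; have kG : (k < size G)%N by rewrite (leq_ltn_trans le_kx) ?index_mem.
have Gk_lt : radius (nth 0 G k) < t.
  by apply: (nth_find 0 (a := fun g => radius g < t)); rewrite has_find.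
have x_near : capped_dist x (take k G) < t.
  apply: le_lt_trans Gk_lt; rewrite radius_nth // ffG -?GP //.
  by rewrite in_take // -leqNgt.
have [q qt qx] := capped_dist_attained (lt_le_trans x_near tM).
exists q; first by rewrite -GP (mem_take qt).
by rewrite -qx (ltW x_near) -{1}(nth_index 0 (mem_take qt)) early ?index_ltn.
Qed.

End FarthestFirst.

Lemma farthest_first_net (R : rcfType) (d : nat) (P : seq 'rV[R]_d) (M : R) :
  uniq P -> 0 < M -> exists rad : 'rV[R]_d -> R,
  [/\ forall v w, v \in P -> w \in P -> v != w -> Num.min (rad v) (rad w) <= dist v w,
      forall v, v \in P -> 0 < rad v &
      forall x t, x \in P -> 0 <= t -> t <= M ->
        exists2 A, A \in P & (t <= rad A) && (dist x A <= t)].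
Proof.
move=> uP M_gt0; have [G [uG GP szG ffG]] := farthest_first_prefix M uP (leqnn _).
have [_ GP'] := uniq_min_size uG GP (eq_leq (esym szG)).
exists (radius M G); split.
- exact: radius_sep.
- by move=> v; apply: radius_gt0.
- exact: radius_cover.
Qed.

Lemma bounded_floor (R : realDomainType) (n : nat) (y : R) : 0 <= y -> y < n%:R ->
  exists2 k, (k < n)%N & (k%:R <= y) && (y < k%:R + 1).
Proof.
elim: n => [|n IH] y_ge0 y_lt; first by rewrite ltNge y_ge0 in y_lt.
have [y_lt'|le_y] := ltP y n%:R; last by exists n; rewrite // le_y natr1.
by have [k lt_k hk] := IH y_ge0 y_lt'; exists k; rewrite // ltnS ltnW.
Qed.

Lemma bounded_ceil (R : realDomainType) (m : nat) (x : R) : 0 <= x -> x < m%:R ->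
  exists N : nat, x <= N%:R <= x + 1.
Proof.
move=> x_ge0 x_lt; have [k _ /andP [k_le lt_k]] := bounded_floor x_ge0 x_lt.
by exists k.+1; rewrite -natr1 ltW //= lerD2r.
Qed.

Section Packing.
Variables (R : rcfType) (d : nat).

Definition floor_ord (n : nat) (a : R) : 'I_n.+1 :=
  odflt ord0 [pick k : 'I_n.+1 | (k%:R <= a) && (a < k%:R + 1)].

Lemma floor_ordP n (a : R) : 0 <= a -> a < n.+1%:R ->
  ((floor_ord n a)%:R <= a) && (a < (floor_ord n a)%:R + 1).
Proof.
move=> a_ge0 a_lt; rewrite /floor_ord; case: pickP => [k //|no_k].
by have [k lt_k hk] := bounded_floor a_ge0 a_lt; have := no_k (Ordinal lt_k); rewrite /= hk.
Qed.

Lemma dist_lt_coord (x y : 'rV[R]_d) (r : R) : (0 < d)%N ->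
  (forall i, `|x 0 i - y 0 i| < r / d%:R) -> dist x y < r.
Proof.
move=> d_gt0 close; pose i0 : 'I_d := Ordinal d_gt0.
have d_pos : (0 : R) < d%:R by rewrite ltr0n.
have r_gt0 : 0 < r.
  by move: (le_lt_trans (normr_ge0 _) (close i0)); rewrite pmulr_lgt0 ?invr_gt0.
have sq_lt i : (x 0 i - y 0 i) ^+ 2 < (r / d%:R) ^+ 2.
  by rewrite -real_normK ?num_real // ltrXn2r.
rewrite /dist -(ger0_norm (ltW r_gt0)) -sqrtr_sqr ltr_sqrt ?exprn_gt0 //.
apply: (@lt_le_trans _ _ (\sum_(i < d) (r / d%:R) ^+ 2)).
  rewrite (bigD1 i0) // [X in _ < X](bigD1 i0) //= ltr_leD //.
  by apply: ler_sum => i _; exact: ltW.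
rewrite sumr_const card_ord -[_ ^+ 2 *+ d]mulr_natl.
have -> : d%:R * (r / d%:R) ^+ 2 = r ^+ 2 / d%:R by field; rewrite gt_eqF.
by rewrite ler_pdivrMr // ler_peMr ?sqr_ge0 // ler1n.
Qed.

(* Snap every point of [Q] to the grid of mesh [rho / d] around [X]: distinct
   points lie in distinct cells, and there are [(2N+2)^d] cells in the box. *)
Lemma packing (Q : seq 'rV[R]_d) (X : 'rV[R]_d) (rho Lam : R) (N : nat) :
  (0 < d)%N -> 0 < rho -> uniq Q ->
  (forall Y Y', Y \in Q -> Y' \in Q -> Y != Y' -> rho <= dist Y Y') ->
  (forall Y, Y \in Q -> dist X Y <= Lam * rho) ->
  d%:R * Lam <= N%:R -> (size Q <= (2 * N + 2) ^ d)%N.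
Proof.
move=> d_gt0 rho_gt0 uQ sep inB dLN.
have d_pos : (0 : R) < d%:R by rewrite ltr0n.
pose c := d%:R / rho; have c_gt0 : 0 < c by rewrite divr_gt0.
pose z (Y : 'rV[R]_d) i := (Y 0 i - X 0 i) * c + N%:R + 1.
have z_range Y i : Y \in Q -> 0 <= z Y i /\ z Y i < (2 * N + 1).+1%:R.
  move=> YQ; have : `|(Y 0 i - X 0 i) * c| <= Lam * d%:R.
    have -> : Lam * d%:R = Lam * rho * c by rewrite /c; field; rewrite lt0r_neq0.
    rewrite normrM (gtr0_norm c_gt0) ler_pM2r // (le_trans (normr_coord_le_dist Y X i)) //.
    by rewrite distC inB.
  by rewrite ler_norml /z -natr1 natrD natrM => /andP [? ?]; split; lra.
have coord_close Y Y' i : Y \in Q -> Y' \in Q ->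
    floor_ord (2 * N + 1) (z Y i) = floor_ord _ (z Y' i) ->
    `|Y 0 i - Y' 0 i| < rho / d%:R.
  move=> YQ Y'Q same; have [z_ge0 z_lt] := z_range Y i YQ.
  have [z'_ge0 z'_lt] := z_range Y' i Y'Q.
  move: (floor_ordP z_ge0 z_lt) (floor_ordP z'_ge0 z'_lt).
  rewrite same => /andP [? ?] /andP [? ?].
  have : `|(Y 0 i - Y' 0 i) * c| < 1.
    have -> : (Y 0 i - Y' 0 i) * c = z Y i - z Y' i by rewrite /z; ring.
    by rewrite ltr_norml; apply/andP; split; lra.
  by rewrite normrM (gtr0_norm c_gt0) -ltr_pdivlMr // mul1r /c invf_div.
pose cell Y : {ffun 'I_d -> 'I_(2 * N + 1).+1} := [ffun i => floor_ord _ (z Y i)].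
have cell_inj : {in Q &, injective cell}.
  move=> Y Y' YQ Y'Q /ffunP same_cell; apply/eqP; apply: contraT => Y_neq.
  have : dist Y Y' < rho.
    by apply: dist_lt_coord => // i; apply: coord_close => //; move: (same_cell i);
      rewrite !ffunE.
  by rewrite ltNge sep.
have : (size (map cell Q) <= #|{ffun 'I_d -> 'I_(2 * N + 1).+1}|)%N.
  by rewrite cardE uniq_leq_size ?map_inj_in_uniq // => f _; rewrite mem_enum.
by rewrite size_map card_ffun !card_ord -addnS.
Qed.

End Packing.

Section Anchors.
Variables (R : rcfType) (d : nat) (s : R).
Hypothesis s_gt1 : 1 < s.
Implicit Types (e f XY : 'rV[R]_d * 'rV[R]_d).

Definition anchored e XY : bool :=
  let r := dist e.1 e.2 in
  [|| (4 * (2 * s + 2) * dist e.1 XY.1 <= r) && (4 * (2 * s + 2) * dist e.2 XY.2 <= r)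
    | (4 * (2 * s + 2) * dist e.2 XY.1 <= r) && (4 * (2 * s + 2) * dist e.1 XY.2 <= r)].

Lemma blocks_oriented_anchored (a b a' b' X Y : 'rV[R]_d) :
  4 * (2 * s + 2) * dist a X <= dist a b -> 4 * (2 * s + 2) * dist b Y <= dist a b ->
  4 * (2 * s + 2) * dist a' X <= dist a' b' -> 4 * (2 * s + 2) * dist b' Y <= dist a' b' ->
  blocks_oriented s a b a' b'.
Proof.
set c := 2 * s + 2 => aX bY a'X b'Y.
have c_ge4 : 4 <= c by rewrite /c; have := s_gt1; lra.
have ab_le := dist_triangle3 a X Y b; have XY_le := dist_triangle3 X a' b' Y.
rewrite (distC Y b) in ab_le; rewrite (distC X a') in XY_le.
have tri : dist a b <= dist a X + dist b Y + dist a' X + dist b' Y + dist a' b' by lra.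
have scaled : 4 * c * dist a b <= 2 * dist a b + 2 * dist a' b' + 4 * c * dist a' b'.
  by rewrite (le_trans (ler_wpM2l _ tri)) //; lra.
have a'b'_ge0 := dist_ge0 a' b'.
have ab_small : dist a b <= 3 * dist a' b' by nra.
have aa' : c * dist a a' <= dist a' b'.
  by rewrite (le_trans (ler_wpM2l _ (dist_triangle a X a'))) ?(distC X a'); nra.
have bb' : c * dist b b' <= dist a' b'.
  by rewrite (le_trans (ler_wpM2l _ (dist_triangle b Y b'))) ?(distC Y b'); nra.
have c_gt0 : 0 < c by lra.
by rewrite /blocks_oriented !ler_pdivlMr // ![_ * c]mulrC aa' bb'.
Qed.

Lemma anchored_blocks e f XY : anchored e XY -> anchored f XY -> blocks s e f.
Proof.
case: e f XY => [a b] [a' b'] [X Y]; rewrite /anchored /=.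
case/orP => /andP [eX eY] /orP [] /andP [fX fY].
- by rewrite /blocks /= (blocks_oriented_anchored eX eY fX fY).
- rewrite (distC a' b') in fX fY.
  by rewrite /blocks /= (blocks_oriented_anchored eX eY fX fY) orbT.
- rewrite (distC a b) in eX eY.
  by rewrite -blocks_sym_edge /blocks /= (blocks_oriented_anchored eX eY fX fY).
- rewrite (distC a b) in eX eY; rewrite (distC a' b') in fX fY.
  by rewrite -blocks_sym_edge /blocks /= (blocks_oriented_anchored eX eY fX fY) orbT.
Qed.

End Anchors.

Lemma sumn_map_le (T : eqType) (f : T -> nat) (r : seq T) K :
  (forall x, x \in r -> f x <= K)%N -> (sumn [seq f x | x <- r] <= size r * K)%N.
Proof.
elim: r => [//|x r IH] f_le /=; rewrite mulSn leq_add ?f_le ?mem_head //.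
by apply: IH => y yr; apply: f_le; rewrite inE yr orbT.
Qed.

Section EdgeCount.
Variables (R : rcfType) (d : nat) (s M : R) (P : seq 'rV[R]_d).
Variables (ord : seq ('rV[R]_d * 'rV[R]_d)) (rad : 'rV[R]_d -> R).
Hypotheses (s_gt1 : 1 < s) (ordP : valid_order P ord).
Hypothesis P_bounded : forall p q, p \in P -> q \in P -> dist p q <= M.
Hypothesis rad_sep : forall v w, v \in P -> w \in P -> v != w ->
  Num.min (rad v) (rad w) <= dist v w.
Hypothesis rad_cover : forall x t, x \in P -> 0 <= t -> t <= M ->
  exists2 A, A \in P & (t <= rad A) && (dist x A <= t).
Local Notation E := (uncoordinated s ord).

Definition net_neighbours X :=
  [seq Y <- P | (rad X <= rad Y) && (dist X Y <= (8 * s + 10) * rad X)].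

Definition net_pairs := [seq (X, Y) | X <- P, Y <- net_neighbours X].

Lemma edge_anchored e : e \in E -> has (anchored s e) net_pairs.
Proof.
case: e => a b abE; have [/= aP bP _] := uncoordinated_edgeP ordP abE.
have c_ge1 : 1 <= 4 * (2 * s + 2) by have := s_gt1; lra.
set t := dist a b / (4 * (2 * s + 2)).
have ab_eq : 4 * (2 * s + 2) * t = dist a b.
  by rewrite /t mulrC divfK // lt0r_neq0 // (lt_le_trans ltr01).
have t_ge0 : 0 <= t by rewrite divr_ge0 ?dist_ge0 //; lra.
have t_le : t <= M by rewrite (le_trans _ (P_bounded aP bP)) // -ab_eq ler_peMl.
have [A AP /andP [tA aA]] := rad_cover aP t_ge0 t_le.
have [B BP /andP [tB bB]] := rad_cover bP t_ge0 t_le.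
have AB_le : dist A B <= (8 * s + 10) * t.
  by rewrite (le_trans (dist_triangle3 A a b B)) // (distC A a); nra.
have c_gt0 : 0 < 4 * (2 * s + 2) by lra.
have anchAB : anchored s (a, b) (A, B) by rewrite /anchored /= -ab_eq !ler_pM2l // aA bB.
have anchBA : anchored s (a, b) (B, A).
  by rewrite /anchored /= -ab_eq !ler_pM2l // aA bB orbT.
apply/hasP; have [AB|BA] := leP (rad A) (rad B).
  exists (A, B) => //; apply/allpairsPdep; exists A, B; split => //.
  by rewrite mem_filter AB BP (le_trans AB_le) // ler_wpM2l //; lra.
exists (B, A) => //; apply/allpairsPdep; exists B, A; split => //.
by rewrite mem_filter (ltW BA) AP distC (le_trans AB_le) // ler_wpM2l //; lra.
Qed.

Lemma size_uncoordinated_le_net_pairs : (size E <= size net_pairs)%N.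
Proof.
pose anchor e := nth (0, 0) net_pairs (find (anchored s e) net_pairs).
have anchorP e : e \in E -> anchored s e (anchor e) && (anchor e \in net_pairs).
  by move=> /edge_anchored has_e; rewrite nth_find // mem_nth -?has_find.
rewrite -(size_map anchor) uniq_leq_size //; last first.
  by move=> _ /mapP [e /anchorP /andP [_ ?] ->].
have s_gt : -1 < s by have := s_gt1; lra.
rewrite map_inj_in_uniq; first exact: uncoordinated_uniq.
move=> e f eE fE same.
have /andP [ea _] := anchorP e eE; have /andP [fa _] := anchorP f fE.
rewrite same in ea.
exact: uncoordinated_mutual_blocks eE fE (anchored_blocks s_gt1 ea fa)
  (anchored_blocks s_gt1 fa ea).
Qed.

Lemma size_net_pairs (N : nat) : (0 < d)%N -> uniq P ->
  (forall v, v \in P -> 0 < rad v) ->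
  d%:R * (8 * s + 10) <= N%:R -> (size net_pairs <= size P * (2 * N + 2) ^ d)%N.
Proof.
move=> d_gt0 uP rad_gt0 dN; rewrite size_allpairs_dep sumn_map_le // => X XP.
apply: (packing (X := X) d_gt0 (rad_gt0 X XP) (filter_uniq _ uP)) dN => [Y Y'|Y].
  rewrite !mem_filter => /andP [/andP [XY _] YP] /andP [/andP [XY' _] Y'P] YY'.
  by rewrite (le_trans _ (rad_sep YP Y'P YY')) // le_min XY XY'.
by rewrite mem_filter => /andP [/andP [_ ->]].
Qed.

End EdgeCount.

Lemma size_uncoordinated_grid (R : rcfType) (d : nat) (s : R) (P : seq 'rV[R]_d)
    (ord : seq ('rV[R]_d * 'rV[R]_d)) (N : nat) :
  (0 < d)%N -> 1 < s -> uniq P -> valid_order P ord ->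
  d%:R * (8 * s + 10) <= N%:R ->
  (size (uncoordinated s ord) <= size P * (2 * N + 2) ^ d)%N.
Proof.
move=> d_gt0 s_gt1 uP ordP dN.
pose M := \big[Num.max/1]_(x <- P) \big[Num.max/1]_(y <- P) dist x y.
have M_gt0 : 0 < M by rewrite (lt_le_trans ltr01) ?bigmax_ge_id.
have P_bounded p q : p \in P -> q \in P -> dist p q <= M.
  by move=> pP qP; apply: (bigmax_sup_seq _ p) => //; apply: (bigmax_sup_seq _ q).
have [rad [rad_sep rad_gt0 rad_cover]] := farthest_first_net uP M_gt0.
apply: leq_trans (size_uncoordinated_le_net_pairs s_gt1 ordP P_bounded rad_cover) _.
exact: size_net_pairs.
Qed.

(* The grid bound needs an integer [N >= d (8s + 10)], which need not exist in a
   non-archimedean field; when [s >= |P|] the trivial bound [|P|^2] suffices. *)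
Lemma size_uncoordinated_bound (R : rcfType) (d : nat) (s : R) (P : seq 'rV[R]_d)
    (ord : seq ('rV[R]_d * 'rV[R]_d)) :
  (0 < d)%N -> 1 < s -> uniq P -> valid_order P ord ->
  (size (uncoordinated s ord))%:R <= ((40 * d) ^ d)%N%:R * (size P)%:R * s ^+ d.
Proof.
move=> d_gt0 s_gt1 uP ordP; set n := size P.
have s_le : s <= s ^+ d by rewrite -(prednK d_gt0) exprS ler_peMr ?exprn_ege1; lra.
have C_ge1 : (1 : R) <= ((40 * d) ^ d)%N%:R by rewrite ler1n expn_gt0 muln_gt0 d_gt0.
have [n_le|s_lt] := leP n%:R s.
  have s_gt : -1 < s by lra.
  have n_sq : (size (uncoordinated s ord))%:R <= n%:R * n%:R :> R.
    by rewrite -natrM ler_nat size_uncoordinated_le.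
  apply: (le_trans n_sq); rewrite -mulrA.
  apply: (@le_trans _ _ (n%:R * s ^+ d)); first by rewrite ler_wpM2l // (le_trans n_le).
  by rewrite ler_peMl // mulr_ge0 ?exprn_ge0 //; lra.
have x_ge0 : 0 <= d%:R * (8 * s + 10) by rewrite mulr_ge0 //; lra.
have x_lt : d%:R * (8 * s + 10) < (d * (8 * n + 10))%N%:R.
  by rewrite natrM ltr_pM2l ?ltr0n // natrD natrM; lra.
have [N /andP [dN N_le]] := bounded_ceil x_ge0 x_lt.
have := size_uncoordinated_grid d_gt0 s_gt1 uP ordP dN.
rewrite -(ler_nat R) => /le_trans; apply.
have d_ge1 : (1 : R) <= d%:R by rewrite ler1n.
have grid_le : (2 * N + 2)%N%:R <= 40 * d%:R * s :> R by rewrite natrD natrM; nra.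
rewrite natrM natrX [_ * n%:R]mulrC -mulrA ler_wpM2l // natrX natrM -exprMn.
by rewrite lerXn2r // nnegrE ?ler0n // !mulr_ge0 //; lra.
Qed.

Theorem theorem9 (d : nat) : (1 <= d)%N ->
  exists C : nat,
  forall (R : rcfType) (P : seq 'rV[R]_d) (s : R) (ord : seq ('rV[R]_d * 'rV[R]_d)),
    uniq P -> 1 < s -> valid_order P ord ->
    let E := uncoordinated s ord in
    (forall p q, p \in P -> q \in P ->
       exists w : seq 'rV[R]_d,
         path (adj E) p w /\ last p w = q /\
         path_len p w <= (s + 1) / (s - 1) * dist p q)
    /\ (size E)%:R <= C%:R * (size P)%:R * s ^+ d.
Proof.
move=> d_gt0; exists ((40 * d) ^ d)%N => R P s ord uP s_gt1 ordP E; split.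
  move=> p q pP qP; have [w [pw wq len]] := uncoordinated_spanner s_gt1 ordP pP qP.
  by exists w.
exact: size_uncoordinated_bound.
Qed.
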